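(* There is $c_1>0$ (depending on $d,\gamma,\chi$) such that for all $N$ large enough, $$\inf_{x\in\partial B}P_x[H_G<H_\Delta]\ge c_1N^{\gamma-1},$$ where $G=\{x\in B:\mathrm{dist}(x,\partial B)\ge\chi N/2\}$.
   Context: Let $d\ge3$, $\gamma\in(\frac1{d-1},1)$, $\chi\in(0,\frac14)$. Identify $\mathbb T_N^d$ with $\{0,\dots,N-1\}^d$. Let $L=2N^\gamma+\chi N$, $B=\bigcup_{x\in[L,N-L]^d\cap\mathbb Z^d}B(x,\chi N)$ (Euclidean balls), $\Delta=\big(\bigcup_{x\in B}B(x,N^\gamma)\big)^c$, as subsets of $\mathbb T_N^d$. $\partial K=\{x\in K:\exists y\notin K,|x-y|=1\}$; $\mathrm{dist}$ is Euclidean distance. $P_x$ is the law of simple random walk on $\mathbb T_N^d$ started at $x$, $H_K=\inf\{k\ge0:X_k\in K\}$. *)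

From Stdlib Require Import Reals ZArith Arith Lia Lra.
From Stdlib Require Import Classical ClassicalEpsilon.
Open Scope R_scope.

(* A point of the torus T_N^d = {0,...,N-1}^d is represented by its
   coordinate function; only coordinates i < d are meaningful. *)
Definition pt := nat -> Z.

Definition in_torus (d N : nat) (x : pt) : Prop :=
  forall i, (i < d)%nat -> (0 <= x i < Z.of_nat N)%Z.

Fixpoint sumR (n : nat) (f : nat -> R) : R :=
  match n with
  | O => 0
  | S m => sumR m f + f m
  end.

Definition tdist (d N : nat) (x y : pt) : R :=
  sqrt (sumR d (fun i =>
    let a := Rabs (IZR (x i - y i)) in (Rmin a (INR N - a)) ^ 2)).

Definition Lrad (N : nat) (gamma chi : R) : R :=
  2 * Rpower (INR N) gamma + chi * INR N.

Definition Bset (d N : nat) (gamma chi : R) (y : pt) : Prop :=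
  in_torus d N y /\
  exists c : pt, in_torus d N c /\
    (forall i, (i < d)%nat ->
       Lrad N gamma chi <= IZR (c i) <= INR N - Lrad N gamma chi) /\
    tdist d N c y <= chi * INR N.

Definition DeltaSet (d N : nat) (gamma chi : R) (y : pt) : Prop :=
  in_torus d N y /\
  ~ (exists z, Bset d N gamma chi z /\ tdist d N z y <= Rpower (INR N) gamma).

Definition bdry (d N : nat) (K : pt -> Prop) (x : pt) : Prop :=
  K x /\ exists y, in_torus d N y /\ ~ K y /\ tdist d N x y = 1.

Definition Gset (d N : nat) (gamma chi : R) (x : pt) : Prop :=
  Bset d N gamma chi x /\
  forall z, bdry d N (Bset d N gamma chi) z -> chi * INR N / 2 <= tdist d N x z.

Definition srw_step (d N : nat) (k : nat) (x : pt) : pt :=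
  fun i => if Nat.eqb i (k / 2)
           then (if Nat.even k then ((x i + 1) mod Z.of_nat N)%Z
                 else ((x i - 1) mod Z.of_nat N)%Z)
           else x i.

Definition decP (P : Prop) : {P} + {~ P} := excluded_middle_informative P.

(* srw_hit d N A D n x = P_x[H_A < H_D, H_A <= n] for SRW on T_N^d
   (each of the 2d directions with probability 1/(2d)). *)
Fixpoint srw_hit (d N : nat) (A D : pt -> Prop) (n : nat) (x : pt) : R :=
  if decP (D x) then 0 else if decP (A x) then 1 else
  match n with
  | O => 0
  | S m => / INR (2 * d) * sumR (2 * d) (fun k => srw_hit d N A D m (srw_step d N k x))
  end.

(* P_x[H_A < H_D] is the (monotone) limit of srw_hit ... n x as n -> oo. *)

(* Let rho be the Euclidean distance to the cube [L, N - L]^d, whose lattice points are the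
   centres of the balls forming B.  Up to additive errors O(d), B is the region rho <= chi N,
   G contains rho <= chi N / 2, and the complement of Delta lies between rho < chi N + N^gamma / 2
   and rho <= chi N + N^gamma.  With lam = K / N^2 the potential psi = exp (- lam rho^2) gains
   at least lam e^-K per step on average between G and Delta, because there rho is of order
   N and the curvature of rho^2 wins over the gradient term.  Optional stopping at G or Delta
   gives P_x[H_G < H_Delta] >= psi x - sup_Delta psi, and for x in B this is at least
   e^(-K chi^2) (1 - e^(-K chi N^(gamma - 1))), of order N^(gamma - 1). *)

From Stdlib Require Import Reals ZArith Arith Lia Lra Psatz.
From Stdlib Require Import Classical.
Open Scope R_scope.

Lemma sumR_ext n f g : (forall i, (i < n)%nat -> f i = g i) -> sumR n f = sumR n g.
Proof.
  induction n as [|n IH]; intros H; simpl; [reflexivity|].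
  rewrite IH, H; [reflexivity| lia |intros i Hi; apply H; lia].
Qed.

Lemma sumR_le n f g : (forall i, (i < n)%nat -> f i <= g i) -> sumR n f <= sumR n g.
Proof.
  induction n as [|n IH]; intros H; simpl; [lra|].
  apply Rplus_le_compat; [apply IH; intros; apply H|apply H]; lia.
Qed.

Lemma sumR_plus n f g : sumR n (fun i => f i + g i) = sumR n f + sumR n g.
Proof. induction n as [|n IH]; simpl; [lra|]. rewrite IH; ring. Qed.

Lemma sumR_scal n c f : sumR n (fun i => c * f i) = c * sumR n f.
Proof. induction n as [|n IH]; simpl; [ring|]. rewrite IH; ring. Qed.

Lemma sumR_const n c : sumR n (fun _ => c) = INR n * c.
Proof. induction n as [|n IH]; simpl sumR; [simpl; ring|]. rewrite IH, S_INR; ring. Qed.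

Lemma sumR_nonneg n f : (forall i, (i < n)%nat -> 0 <= f i) -> 0 <= sumR n f.
Proof.
  intros H. rewrite <- (Rmult_0_r (INR n)), <- sumR_const. now apply sumR_le.
Qed.

Lemma sumR_term_le n f i :
  (forall j, (j < n)%nat -> 0 <= f j) -> (i < n)%nat -> f i <= sumR n f.
Proof.
  induction n as [|n IH]; intros H Hi; [lia|]. simpl.
  assert (0 <= sumR n f) by (apply sumR_nonneg; intros; apply H; lia).
  destruct (Nat.eq_dec i n) as [->|Hin]; [lra|].
  assert (f i <= sumR n f) by (apply IH; [intros; apply H|]; lia).
  assert (0 <= f n) by (apply H; lia). lra.
Qed.

Lemma sumR_update n F G i : (i < n)%nat -> (forall j, j <> i -> F j = G j) ->
  sumR n F = sumR n G - G i + F i.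
Proof.
  induction n as [|n IH]; intros Hi H; [lia|]. simpl.
  destruct (Nat.eq_dec i n) as [->|Hin].
  - rewrite (sumR_ext n F G); [ring|]. intros j Hj; apply H; lia.
  - rewrite IH, (H n) by (auto; lia). ring.
Qed.

Lemma sumR_pairs n g :
  sumR (2 * n) g = sumR n (fun i => g (2 * i)%nat + g (2 * i + 1)%nat).
Proof.
  induction n as [|n IH]; [reflexivity|].
  replace (2 * S n)%nat with (S (S (2 * n))) by lia.
  change (sumR (S (S (2 * n))) g) with (sumR (2 * n) g + g (2 * n)%nat + g (S (2 * n))).
  rewrite IH. replace (S (2 * n)) with (2 * n + 1)%nat by lia.
  cbn [sumR]. ring.
Qed.

Definition dir_avg (d : nat) (g : nat -> R) : R := / INR (2 * d) * sumR (2 * d) g.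

Lemma dir_avg_plus d f g : dir_avg d (fun k => f k + g k) = dir_avg d f + dir_avg d g.
Proof. unfold dir_avg. rewrite sumR_plus. ring. Qed.

Lemma dir_avg_scal d c f : dir_avg d (fun k => c * f k) = c * dir_avg d f.
Proof. unfold dir_avg. rewrite sumR_scal. ring. Qed.

Lemma dir_avg_const d c : (0 < d)%nat -> dir_avg d (fun _ => c) = c.
Proof. intros Hd. unfold dir_avg. rewrite sumR_const. field. apply not_0_INR. lia. Qed.

Lemma dir_avg_le d f g : (0 < d)%nat ->
  (forall k, (k < 2 * d)%nat -> f k <= g k) -> dir_avg d f <= dir_avg d g.
Proof.
  intros Hd H. unfold dir_avg. apply Rmult_le_compat_l; [|now apply sumR_le].
  left. apply Rinv_0_lt_compat, lt_0_INR. lia.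
Qed.

Lemma dir_avg_bounds d g lo hi : (0 < d)%nat ->
  (forall k, (k < 2 * d)%nat -> lo <= g k <= hi) -> lo <= dir_avg d g <= hi.
Proof.
  intros Hd H. rewrite <- (dir_avg_const d lo Hd) at 1. rewrite <- (dir_avg_const d hi Hd).
  split; apply dir_avg_le; auto; intros k Hk; apply H, Hk.
Qed.

Definition l2norm (n : nat) (a : nat -> R) : R := sqrt (sumR n (fun i => a i ^ 2)).

Lemma l2norm_nonneg n a : 0 <= l2norm n a.
Proof. apply sqrt_pos. Qed.

Lemma l2norm_sq n a : l2norm n a ^ 2 = sumR n (fun i => a i ^ 2).
Proof.
  unfold l2norm. rewrite <- Rsqr_pow2. apply Rsqr_sqrt, sumR_nonneg.
  intros; apply pow2_ge_0.
Qed.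

Lemma cauchy_schwarz n a b :
  sumR n (fun i => a i * b i) ^ 2 <= sumR n (fun i => a i ^ 2) * sumR n (fun i => b i ^ 2).
Proof.
  induction n as [|n IH]; cbn [sumR]; [lra|].
  set (P := sumR n (fun i => a i * b i)) in *.
  set (S := sumR n (fun i => a i ^ 2)) in *. set (T := sumR n (fun i => b i ^ 2)) in *.
  assert (HS : 0 <= S) by (apply sumR_nonneg; intros; apply pow2_ge_0).
  assert (HT : 0 <= T) by (apply sumR_nonneg; intros; apply pow2_ge_0).
  assert (HsS := sqrt_sqrt S HS). assert (HsT := sqrt_sqrt T HT).
  assert (0 <= sqrt S) by apply sqrt_pos. assert (0 <= sqrt T) by apply sqrt_pos.
  assert (HP : Rabs P <= sqrt S * sqrt T).
  { rewrite <- sqrt_mult, <- (sqrt_pow2 (Rabs P)) by (auto; apply Rabs_pos).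
    apply sqrt_le_1_alt. rewrite pow2_abs. lra. }
  (* the cross term, by AM-GM: [2 |P a b| <= 2 sqrt S |b| sqrt T |a| <= S b^2 + a^2 T] *)
  assert (Hcross : 2 * P * (a n * b n) <= S * b n ^ 2 + a n ^ 2 * T).
  { assert (P * (a n * b n) <= Rabs P * (Rabs (a n) * Rabs (b n))).
    { rewrite <- !Rabs_mult. apply RRle_abs. }
    assert (0 <= Rabs (a n)) by apply Rabs_pos. assert (0 <= Rabs (b n)) by apply Rabs_pos.
    rewrite <- (pow2_abs (a n)), <- (pow2_abs (b n)).
    assert (0 <= (sqrt S * Rabs (b n) - sqrt T * Rabs (a n)) ^ 2) by apply pow2_ge_0.
    assert (Rabs P * (Rabs (a n) * Rabs (b n)) <= sqrt S * sqrt T * (Rabs (a n) * Rabs (b n)))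
      by (apply Rmult_le_compat_r; nra).
    nra. }
  nra.
Qed.

Lemma sumR_mul_le_l2norm n a b : sumR n (fun i => a i * b i) <= l2norm n a * l2norm n b.
Proof.
  set (P := sumR n (fun i => a i * b i)).
  assert (0 <= l2norm n a * l2norm n b) by (apply Rmult_le_pos; apply l2norm_nonneg).
  destruct (Rle_dec P 0); [lra|].
  rewrite <- (sqrt_pow2 P) by lra. unfold l2norm. rewrite <- sqrt_mult_alt.
  - apply sqrt_le_1_alt, cauchy_schwarz.
  - apply sumR_nonneg; intros; apply pow2_ge_0.
Qed.

Lemma l2norm_triangle n a b :
  l2norm n (fun i => a i + b i) <= l2norm n a + l2norm n b.
Proof.
  assert (HC := sumR_mul_le_l2norm n a b).
  assert (Ha := l2norm_nonneg n a). assert (Hb := l2norm_nonneg n b).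
  rewrite <- (sqrt_pow2 (l2norm n a + l2norm n b)) by lra.
  apply sqrt_le_1_alt.
  assert (E : sumR n (fun i => (a i + b i) ^ 2) =
              sumR n (fun i => a i ^ 2) + 2 * sumR n (fun i => a i * b i)
              + sumR n (fun i => b i ^ 2)).
  { rewrite <- sumR_scal, <- !sumR_plus. apply sumR_ext; intros; ring. }
  rewrite E, <- !l2norm_sq. nra.
Qed.

Lemma coord_le_l2norm n f i : (forall j, (j < n)%nat -> 0 <= f j) -> (i < n)%nat ->
  f i <= l2norm n f.
Proof.
  intros H Hi. rewrite <- (sqrt_pow2 (f i)) by (apply H; auto). apply sqrt_le_1_alt.
  apply (sumR_term_le n (fun j => f j ^ 2)); auto. intros; apply pow2_ge_0.
Qed.

Lemma sumR_le_l2norm n f : (forall j, (j < n)%nat -> 0 <= f j) ->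
  sumR n f <= INR n * l2norm n f.
Proof. intros H. rewrite <- sumR_const. apply sumR_le. intros; now apply coord_le_l2norm. Qed.

Lemma l2norm_le_compat n f g : (forall j, (j < n)%nat -> 0 <= f j <= g j) ->
  l2norm n f <= l2norm n g.
Proof.
  intros H. apply sqrt_le_1_alt, sumR_le. intros j Hj.
  destruct (H j Hj). apply pow_incr; auto.
Qed.

Lemma l2norm_scal n t b : 0 <= t -> l2norm n (fun i => t * b i) = t * l2norm n b.
Proof.
  intros Ht. unfold l2norm. rewrite (sumR_ext n _ (fun i => t ^ 2 * b i ^ 2)) by (intros; ring).
  rewrite sumR_scal, sqrt_mult_alt, sqrt_pow2 by (auto; apply pow2_ge_0). reflexivity.
Qed.

Lemma l2norm_ones_le n : l2norm n (fun _ => 1) <= INR n.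
Proof.
  unfold l2norm. rewrite sumR_const, pow1, Rmult_1_r.
  destruct n as [|n]; [simpl; rewrite sqrt_0; lra|].
  assert (1 <= INR (S n)) by (apply (le_INR 1); lia).
  rewrite <- (sqrt_pow2 (INR (S n))) at 2 by lra. apply sqrt_le_1_alt. nra.
Qed.

Lemma l2norm_add_ones_le n f :
  l2norm n (fun i => f i + 1) <= l2norm n f + INR n.
Proof.
  eapply Rle_trans; [apply (l2norm_triangle n f (fun _ => 1))|].
  pose proof (l2norm_ones_le n). lra.
Qed.

Lemma exp_le_compat x y : x <= y -> exp x <= exp y.
Proof. intros [H| ->]; [left; now apply exp_increasing | lra]. Qed.

Lemma exp_neg_ge_quadratic z : Rabs z <= 1/2 -> 1 - z + z ^ 2 / 3 <= exp (- z).
Proof.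
  intros Hz. assert (Hz2 : - (1/2) <= z <= 1/2) by (unfold Rabs in Hz; destruct Rcase_abs; lra).
  (* [exp (-z) = exp (-z/4)^4 >= (1 - z/4)^4], and the quartic dominates on [|z| <= 1/2] *)
  assert (E : exp (- z) = exp (- z / 4) ^ 4).
  { simpl. rewrite Rmult_1_r, <- !exp_plus. f_equal. lra. }
  assert (H1 := exp_ineq1_le (- z / 4)).
  assert (H2 : (1 + - z / 4) ^ 4 <= exp (- z / 4) ^ 4) by (apply pow_incr; lra).
  assert (0 <= z ^ 2 * (1/24 - z/16 + z ^ 2/256)) by (apply Rmult_le_pos; [apply pow2_ge_0|nra]).
  nra.
Qed.

Lemma Rpower_minus_1 x e : 0 < x -> Rpower x (e - 1) = Rpower x e / x.
Proof.
  intros Hx. unfold Rminus. rewrite Rpower_plus, Rpower_Ropp, Rpower_1 by lra. reflexivity.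
Qed.

Lemma Rpower_ge_of_ge x e c : 0 < e -> 0 < c -> Rpower c (/ e) <= x -> c <= Rpower x e.
Proof.
  intros He Hc Hx. replace c with (Rpower (Rpower c (/ e)) e) at 1.
  - apply Rle_Rpower_l; [lra|]. split; [apply exp_pos | exact Hx].
  - rewrite Rpower_mult, Rinv_l, Rpower_1 by lra. reflexivity.
Qed.

Lemma Rpower_sublinear x e c : e < 1 -> 0 < c -> 0 < x -> Rpower c (/ (1 - e)) <= x ->
  c * Rpower x e <= x.
Proof.
  intros He Hc Hx Hcx.
  assert (Hc' : c <= Rpower x (1 - e)) by (apply Rpower_ge_of_ge; lra).
  assert (E : Rpower x e * Rpower x (1 - e) = x)
    by (rewrite <- Rpower_plus; replace (e + (1 - e)) with 1 by ring; apply Rpower_1; lra).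
  rewrite <- E at 2. rewrite Rmult_comm. apply Rmult_le_compat_l; [left; apply exp_pos | lra].
Qed.

Lemma INR_eventually_ge (M : R) : exists N0, forall N, (N0 <= N)%nat -> M <= INR N.
Proof.
  destruct (INR_unbounded M) as [N0 HN0]. exists N0. intros N HN.
  apply le_INR in HN. lra.
Qed.

Definition interval_dist (a b t : R) : R := Rmax 0 (Rmax (a - t) (t - b)).

Lemma interval_dist_spec a b t : a <= b ->
  interval_dist a b t = if Rle_dec t a then a - t else if Rle_dec t b then 0 else t - b.
Proof. intros H. unfold interval_dist, Rmax. repeat destruct Rle_dec; lra. Qed.

Lemma interval_dist_nonneg a b t : 0 <= interval_dist a b t.
Proof. apply Rmax_l. Qed.

Ltac interval_dist_cases H := repeat rewrite (interval_dist_spec _ _ _ H); repeat destruct Rle_dec.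

Lemma interval_dist_circle_lip a n s t : 0 <= a <= n - a -> 0 <= s < n -> 0 <= t < n ->
  interval_dist a (n - a) t <=
  interval_dist a (n - a) s + Rmin (Rabs (s - t)) (n - Rabs (s - t)).
Proof.
  intros [H0 H] Hs Ht. unfold Rmin, Rabs.
  repeat destruct Rcase_abs; repeat destruct Rle_dec; interval_dist_cases H; lra.
Qed.

Section IntervalDistSquare.

Variables a b t : R.
Hypothesis Hab : a + 2 <= b.

Let D := interval_dist a b t.
Let u := interval_dist a b (t + 1) ^ 2 - D ^ 2.
Let v := interval_dist a b (t - 1) ^ 2 - D ^ 2.

Lemma interval_dist_sq_laplacian : u + v <= 2.
Proof. assert (H : a <= b) by lra. unfold u, v, D. interval_dist_cases H; nra. Qed.

Lemma interval_dist_sq_gradient : 16 * D ^ 2 - 32 * D <= (u - v) ^ 2.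
Proof.
  assert (H : a <= b) by lra. unfold u, v, D.
  interval_dist_cases H; try nra; (apply Rle_trans with 0; [nra | apply pow2_ge_0]).
Qed.

Lemma interval_dist_sq_step_bound : Rabs u <= 2 * D + 1 /\ Rabs v <= 2 * D + 1.
Proof.
  assert (H : a <= b) by lra. unfold u, v, D.
  split; apply Rabs_le; interval_dist_cases H; split; nra.
Qed.

(** Second-order expansion of [s |-> exp (- lam * interval_dist a b s ^ 2)] at [t]. *)
Lemma exp_interval_dist_sq_second_diff lam : 0 <= lam -> lam * (2 * D + 1) <= 1/2 ->
  2 - 2 * lam + 8 / 3 * lam ^ 2 * (D ^ 2 - 2 * D) <= exp (- (lam * u)) + exp (- (lam * v)).
Proof.
  intros Hl Hsmall.
  destruct interval_dist_sq_step_bound as [Hu Hv].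
  assert (Eu := exp_neg_ge_quadratic (lam * u)). assert (Ev := exp_neg_ge_quadratic (lam * v)).
  rewrite Rabs_mult, Rabs_pos_eq in Eu, Ev by lra.
  assert (lam * Rabs u <= 1/2)
    by (apply Rle_trans with (lam * (2 * D + 1)); [apply Rmult_le_compat_l|]; lra).
  assert (lam * Rabs v <= 1/2)
    by (apply Rle_trans with (lam * (2 * D + 1)); [apply Rmult_le_compat_l|]; lra).
  specialize (Eu ltac:(lra)). specialize (Ev ltac:(lra)).
  assert (HL := interval_dist_sq_laplacian). assert (HG := interval_dist_sq_gradient).
  clearbody D u v.
  assert (0 <= lam ^ 2) by nra.
  assert (lam ^ 2 * (16 * D ^ 2 - 32 * D) <= lam ^ 2 * (u - v) ^ 2)
    by (apply Rmult_le_compat_l; lra).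
  assert (lam ^ 2 * (u - v) ^ 2 <= 2 * lam ^ 2 * (u ^ 2 + v ^ 2)).
  { assert (0 <= lam ^ 2 * (u + v) ^ 2) by (apply Rmult_le_pos; [lra|apply pow2_ge_0]). nra. }
  nra.
Qed.

End IntervalDistSquare.

Lemma in_torus_coord d N y i : in_torus d N y -> (i < d)%nat -> 0 <= IZR (y i) < INR N.
Proof.
  intros H Hi. destruct (H i Hi). rewrite INR_IZR_INZ.
  split; [apply IZR_le | apply IZR_lt]; lia.
Qed.

Lemma in_torus_of_coord d N y :
  (forall i, (i < d)%nat -> 0 <= IZR (y i) < INR N) -> in_torus d N y.
Proof.
  intros H i Hi. destruct (H i Hi) as [H1 H2]. rewrite INR_IZR_INZ in H2.
  split; [apply le_IZR | apply lt_IZR]; auto.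
Qed.

Definition circle_dist (N : nat) (s t : Z) : R :=
  Rmin (Rabs (IZR (s - t))) (INR N - Rabs (IZR (s - t))).

Lemma tdist_l2norm d N x y : tdist d N x y = l2norm d (fun i => circle_dist N (x i) (y i)).
Proof. reflexivity. Qed.

Lemma tdist_le d N x y b : in_torus d N x -> in_torus d N y ->
  (forall i, (i < d)%nat -> Rabs (IZR (x i - y i)) <= b i) -> tdist d N x y <= l2norm d b.
Proof.
  intros Hx Hy H. rewrite tdist_l2norm. apply l2norm_le_compat. intros i Hi.
  specialize (H i Hi). apply (in_torus_coord _ _ _ i) in Hx, Hy; auto.
  unfold circle_dist. rewrite minus_IZR in *. unfold Rmin, Rabs in *.
  repeat destruct Rle_dec; repeat destruct Rcase_abs; lra.
Qed.

Lemma tdist_sym d N x y : tdist d N x y = tdist d N y x.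
Proof.
  rewrite !tdist_l2norm. unfold l2norm. f_equal. apply sumR_ext. intros i _.
  unfold circle_dist. rewrite !minus_IZR, Rabs_minus_sym. reflexivity.
Qed.

Lemma srw_step_even d N i y j :
  srw_step d N (2 * i) y j = if Nat.eqb j i then ((y j + 1) mod Z.of_nat N)%Z else y j.
Proof.
  unfold srw_step. rewrite Nat.even_even, Nat.mul_comm, Nat.div_mul by lia. reflexivity.
Qed.

Lemma srw_step_odd d N i y j :
  srw_step d N (2 * i + 1) y j = if Nat.eqb j i then ((y j - 1) mod Z.of_nat N)%Z else y j.
Proof.
  unfold srw_step. rewrite Nat.even_odd.
  replace ((2 * i + 1) / 2)%nat with i by (apply (Nat.div_unique _ 2 i 1); lia).
  reflexivity.
Qed.

Lemma srw_step_in_torus d N k y : (0 < N)%nat -> in_torus d N y -> in_torus d N (srw_step d N k y).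
Proof.
  intros HN Hy i Hi. unfold srw_step.
  destruct (Nat.eqb i (k / 2)); [destruct (Nat.even k)|]; auto; apply Z.mod_pos_bound; lia.
Qed.

Definition truncZ (r : R) : Z := if Rle_dec 0 r then Int_part r else (- Int_part (- r))%Z.

Lemma truncZ_spec r :
  (0 <= r -> 0 <= IZR (truncZ r) <= r) /\ (r < 0 -> r <= IZR (truncZ r) <= 0) /\
  Rabs (r - IZR (truncZ r)) < 1.
Proof.
  assert (Hint : forall s, 0 <= s -> 0 <= IZR (Int_part s) <= s /\ s - 1 < IZR (Int_part s)).
  { intros s Hs. destruct (base_Int_part s). split; [|lra]. split; auto.
    assert (-1 < Int_part s)%Z by (apply lt_IZR; lra). apply IZR_le. lia. }
  unfold truncZ. destruct Rle_dec as [Hr|Hr].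
  - destruct (Hint r Hr). split; [lra|]. split; [lra|]. unfold Rabs; destruct Rcase_abs; lra.
  - destruct (Hint (- r)); [lra|]. rewrite opp_IZR.
    split; [lra|]. split; [lra|]. unfold Rabs; destruct Rcase_abs; lra.
Qed.

Lemma lattice_point_on_segment d N (c y : pt) t : 0 <= t <= 1 ->
  in_torus d N c -> in_torus d N y ->
  exists z : pt, in_torus d N z /\
    l2norm d (fun i => Rabs (IZR (z i - c i))) <= t * l2norm d (fun i => Rabs (IZR (y i - c i))) /\
    l2norm d (fun i => Rabs (IZR (y i - z i)))
      <= (1 - t) * l2norm d (fun i => Rabs (IZR (y i - c i))) + INR d.
Proof.
  intros Ht Hc Hy. set (k i := IZR (y i - c i)). set (s i := IZR (truncZ (t * k i))).
  assert (Hcoord : forall i, Rabs (k i) = Rabs (s i) + Rabs (k i - s i) /\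
    Rabs (s i) <= t * Rabs (k i) /\ Rabs (k i - s i) <= (1 - t) * Rabs (k i) + 1).
  { intros i. unfold s. destruct (truncZ_spec (t * k i)) as [P1 [P2 P3]].
    apply Rabs_def2 in P3.
    destruct (Rle_dec 0 (t * k i)) as [Htk|Htk];
      [specialize (P1 Htk) | specialize (P2 ltac:(lra))];
      unfold Rabs; repeat destruct Rcase_abs; repeat split; nra. }
  exists (fun i => (c i + truncZ (t * k i))%Z).
  assert (Hz : forall i, IZR (c i + truncZ (t * k i)) = IZR (c i) + s i)
    by (intros; apply plus_IZR).
  split; [|split].
  - apply in_torus_of_coord. intros i Hi. rewrite Hz.
    apply (in_torus_coord _ _ _ i) in Hc, Hy; auto.
    assert (Ek : IZR (y i) = IZR (c i) + k i) by (unfold k; rewrite minus_IZR; ring).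
    destruct (Hcoord i) as [Hsplit _]. unfold Rabs in Hsplit.
    repeat destruct Rcase_abs; lra.
  - rewrite <- l2norm_scal by lra. apply l2norm_le_compat. intros i _.
    rewrite minus_IZR, Hz. replace (IZR (c i) + s i - IZR (c i)) with (s i) by ring.
    split; [apply Rabs_pos | apply Hcoord].
  - eapply Rle_trans; [|apply Rplus_le_compat_r, Req_le, l2norm_scal; lra].
    eapply Rle_trans; [|apply l2norm_add_ones_le]. apply l2norm_le_compat. intros i _.
    rewrite minus_IZR, Hz.
    replace (IZR (y i) - (IZR (c i) + s i)) with (k i - s i) by (unfold k; rewrite minus_IZR; ring).
    split; [apply Rabs_pos | apply Hcoord].
Qed.

Section HittingProbability.

Variables (d N : nat) (A D : pt -> Prop).
Hypothesis Hd : (0 < d)%nat.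
Hypothesis HN : (0 < N)%nat.

(** [srw_survive n x] is the probability that the walk from [x] avoids [A] and [D]
    during its first [n] steps. *)
Fixpoint srw_survive (n : nat) (x : pt) : R :=
  if decP (D x) then 0 else if decP (A x) then 0 else
  match n with
  | O => 1
  | S m => dir_avg d (fun k => srw_survive m (srw_step d N k x))
  end.

Lemma srw_survive_bounds n y : 0 <= srw_survive n y <= 1.
Proof.
  revert y; induction n as [|n IH]; intros y; simpl;
    destruct (decP (D y)); try lra; destruct (decP (A y)); try lra.
  apply dir_avg_bounds; auto.
Qed.

Lemma srw_hit_unfold n y : srw_hit d N A D (S n) y =
  if decP (D y) then 0 else if decP (A y) then 1 else
  dir_avg d (fun k => srw_hit d N A D n (srw_step d N k y)).
Proof. reflexivity. Qed.

Lemma srw_hit_bounds n y : 0 <= srw_hit d N A D n y <= 1.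
Proof.
  revert y; induction n as [|n IH]; intros y; [simpl|rewrite srw_hit_unfold];
    destruct (decP (D y)); try lra; destruct (decP (A y)); try lra.
  apply dir_avg_bounds; auto.
Qed.

Lemma srw_hit_mono n y : srw_hit d N A D n y <= srw_hit d N A D (S n) y.
Proof.
  revert y; induction n as [|n IH]; intros y; rewrite srw_hit_unfold;
    [simpl|rewrite srw_hit_unfold];
    destruct (decP (D y)); try lra; destruct (decP (A y)); try lra.
  - apply (dir_avg_bounds d _ 0 1 Hd). intros; exact (srw_hit_bounds 0 _).
  - apply dir_avg_le; auto.
Qed.

Variables (psi : pt -> R) (c0 eta : R).
Hypothesis Hpsi : forall y, in_torus d N y -> 0 <= psi y <= 1.
Hypothesis Hpsi_D : forall y, in_torus d N y -> D y -> psi y <= c0.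
Hypothesis Hc0 : 0 <= c0.
Hypothesis Heta : 0 < eta.
Hypothesis Hdrift : forall y, in_torus d N y -> ~ D y -> ~ A y ->
  psi y + eta <= dir_avg d (fun k => psi (srw_step d N k y)).

(** The drift [eta] of the bounded function [psi] forces the walk to leave the complement
    of [A] and [D]: surviving [n] steps has probability at most [1 / (eta n)]. *)
Lemma drift_bounds_srw_survive n y : in_torus d N y ->
  psi y + eta * INR n * srw_survive n y <= 1.
Proof.
  revert y. induction n as [|n IH]; intros y Hy.
  { simpl. pose proof (Hpsi y Hy). nra. }
  simpl srw_survive. pose proof (Hpsi y Hy).
  destruct (decP (D y)) as [HDy|HDy]; [nra|]. destruct (decP (A y)) as [HAy|HAy]; [nra|].
  pose proof (Hdrift y Hy HDy HAy).
  assert (H2 : dir_avg d (fun k => psi (srw_step d N k y)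
                 + eta * INR n * srw_survive n (srw_step d N k y)) <= 1).
  { rewrite <- (dir_avg_const d 1 Hd). apply dir_avg_le; auto.
    intros; apply IH, srw_step_in_torus; auto. }
  rewrite dir_avg_plus, dir_avg_scal in H2.
  assert (dir_avg d (fun k => srw_survive n (srw_step d N k y)) <= 1)
    by (apply (dir_avg_bounds d _ 0 1 Hd); intros; apply srw_survive_bounds).
  rewrite S_INR. nra.
Qed.

(** Optional stopping for the submartingale [psi] stopped at the first visit to [A] or [D]. *)
Lemma psi_le_srw_hit_survive n y : in_torus d N y ->
  psi y - c0 <= srw_hit d N A D n y + srw_survive n y.
Proof.
  revert y. induction n as [|n IH]; intros y Hy;
    [simpl | rewrite srw_hit_unfold; simpl srw_survive];
    pose proof (Hpsi y Hy);
    (destruct (decP (D y)) as [HDy|HDy]; [pose proof (Hpsi_D y Hy HDy); lra|]);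
    destruct (decP (A y)) as [HAy|HAy]; try lra.
  pose proof (Hdrift y Hy HDy HAy).
  assert (H2 : dir_avg d (fun k => psi (srw_step d N k y) + - c0) <=
               dir_avg d (fun k => srw_hit d N A D n (srw_step d N k y)
                                   + srw_survive n (srw_step d N k y))).
  { apply dir_avg_le; auto. intros; apply IH, srw_step_in_torus; auto. }
  rewrite !dir_avg_plus, dir_avg_const in H2 by auto. lra.
Qed.

Lemma srw_hit_cv_ge x : in_torus d N x ->
  exists l, Un_cv (fun n => srw_hit d N A D n x) l /\ psi x - c0 <= l.
Proof.
  intros Hx.
  assert (Hg : Un_growing (fun n => srw_hit d N A D n x)) by (intro n; apply srw_hit_mono).
  assert (Hb : has_ub (fun n => srw_hit d N A D n x))
    by (exists 1; intros r [n ->]; apply srw_hit_bounds).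
  destruct (growing_cv _ Hg Hb) as [l Hl]. exists l. split; auto.
  pose proof (growing_ineq _ _ Hg Hl) as Hle.
  apply Rnot_lt_le. intros Hlt. set (e := psi x - c0 - l).
  assert (He' : 0 < eta * e) by (unfold e; nra).
  destruct (INR_unbounded (/ (eta * e))) as [n Hn].
  pose proof (psi_le_srw_hit_survive n x Hx).
  pose proof (drift_bounds_srw_survive n x Hx).
  pose proof (Hle n). pose proof (Hpsi x Hx). pose proof (srw_survive_bounds n x).
  assert (1 < eta * e * INR n).
  { apply (Rmult_lt_compat_l (eta * e)) in Hn; auto. rewrite Rinv_r in Hn by lra. lra. }
  assert (srw_survive n x >= e) by (unfold e in *; lra).
  assert (eta * INR n * e <= eta * INR n * srw_survive n x)
    by (apply Rmult_le_compat_l; [apply Rmult_le_pos; [lra|apply pos_INR] | lra]).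
  nra.
Qed.

End HittingProbability.

Section CenteredCube.

Variables (d N : nat) (a : R).
Hypothesis Ha : 0 < a.
Hypothesis HaN : a + 2 <= INR N - a.

Definition cube_dist (y : pt) : R := l2norm d (fun i => interval_dist a (INR N - a) (IZR (y i))).

Lemma cube_dist_coord_le y i :
  (i < d)%nat -> interval_dist a (INR N - a) (IZR (y i)) <= cube_dist y.
Proof.
  intros Hi. apply (coord_le_l2norm d (fun j => interval_dist a (INR N - a) (IZR (y j)))); auto.
  intros; apply interval_dist_nonneg.
Qed.

Lemma cube_dist_lip y z : in_torus d N y -> in_torus d N z ->
  cube_dist z <= cube_dist y + tdist d N y z.
Proof.
  intros Hy Hz. rewrite tdist_l2norm. eapply Rle_trans; [|apply l2norm_triangle].
  apply l2norm_le_compat. intros i Hi. split; [apply interval_dist_nonneg|].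
  apply (in_torus_coord _ _ _ i) in Hy, Hz; auto.
  unfold circle_dist. rewrite minus_IZR. apply interval_dist_circle_lip; auto. lra.
Qed.

Definition in_cube (c : pt) : Prop := forall i, (i < d)%nat -> a <= IZR (c i) <= INR N - a.

Lemma cube_dist_in_cube c : in_cube c -> cube_dist c = 0.
Proof.
  intros H. unfold cube_dist, l2norm.
  rewrite (sumR_ext d _ (fun _ => 0)), sumR_const, Rmult_0_r; [apply sqrt_0|].
  intros i Hi. destruct (H i Hi).
  assert (E : interval_dist a (INR N - a) (IZR (c i)) = 0)
    by (rewrite interval_dist_spec by lra; repeat destruct Rle_dec; lra).
  rewrite E. ring.
Qed.

Lemma cube_dist_ball c y : in_cube c -> in_torus d N c -> in_torus d N y ->
  cube_dist y <= tdist d N c y.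
Proof.
  intros Hc Hct Hy. pose proof (cube_dist_lip c y Hct Hy) as Hlip.
  rewrite (cube_dist_in_cube c Hc) in Hlip. lra.
Qed.

(** The nearest lattice point of the cube, coordinatewise. *)
Definition cube_clamp (y : pt) (i : nat) : Z := Z.max (up a) (Z.min (up (INR N - a) - 1) (y i)).

Lemma cube_clamp_coord y i :
  a <= IZR (cube_clamp y i) <= INR N - a /\
  Rabs (IZR (y i - cube_clamp y i)) <= interval_dist a (INR N - a) (IZR (y i)) + 1.
Proof.
  destruct (archimed a) as [Hl1 Hl2]. destruct (archimed (INR N - a)) as [Hr1 Hr2].
  set (l := up a) in *. set (r := up (INR N - a)) in *.
  assert (Hlr : IZR l <= IZR (r - 1)) by (rewrite minus_IZR; lra).
  apply le_IZR in Hlr. unfold cube_clamp. fold l r.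
  rewrite interval_dist_spec by lra. rewrite minus_IZR.
  destruct (Z.le_gt_cases (y i) l) as [Hyl|Hyl];
    [|destruct (Z.le_gt_cases (y i) (r - 1)) as [Hyr|Hyr]].
  - rewrite Z.min_r, Z.max_l by lia. apply IZR_le in Hyl.
    unfold Rabs; repeat destruct Rle_dec; destruct Rcase_abs; split; lra.
  - rewrite Z.min_r, Z.max_r by lia. apply IZR_lt in Hyl. apply IZR_le in Hyr.
    rewrite minus_IZR in Hyr. unfold Rabs; repeat destruct Rle_dec; destruct Rcase_abs; split; lra.
  - rewrite Z.min_l, Z.max_r by lia. rewrite minus_IZR.
    assert (IZR r <= IZR (y i)) by (apply IZR_le; lia).
    unfold Rabs; repeat destruct Rle_dec; destruct Rcase_abs; split; lra.
Qed.

Lemma cube_clamp_spec y :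
  in_torus d N (cube_clamp y) /\ in_cube (cube_clamp y) /\
  l2norm d (fun i => Rabs (IZR (y i - cube_clamp y i))) <= cube_dist y + INR d.
Proof.
  split; [|split].
  - apply in_torus_of_coord. intros i _. destruct (cube_clamp_coord y i). lra.
  - intros i _. apply cube_clamp_coord.
  - eapply Rle_trans; [|apply l2norm_add_ones_le]. apply l2norm_le_compat. intros i _.
    split; [apply Rabs_pos | apply cube_clamp_coord].
Qed.

Lemma cube_dist_small_no_wrap y i : in_torus d N y -> (i < d)%nat -> cube_dist y < a - 1 ->
  (0 <= y i - 1)%Z /\ (y i + 1 < Z.of_nat N)%Z.
Proof.
  intros Hy Hi Hr. pose proof (cube_dist_coord_le y i Hi) as Hc.
  pose proof (in_torus_coord d N y i Hy Hi).
  rewrite interval_dist_spec in Hc by lra.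
  assert (1 < IZR (y i) < INR N - 1) by (repeat destruct Rle_dec in Hc; lra).
  rewrite INR_IZR_INZ in *. split; [apply le_IZR | apply lt_IZR];
    rewrite ?minus_IZR, ?plus_IZR; lra.
Qed.

Lemma sq_cube_dist_step y i s (v : Z) : (i < d)%nat ->
  (forall j, srw_step d N s y j = if Nat.eqb j i then v else y j) ->
  cube_dist (srw_step d N s y) ^ 2 = cube_dist y ^ 2 +
    (interval_dist a (INR N - a) (IZR v) ^ 2 - interval_dist a (INR N - a) (IZR (y i)) ^ 2).
Proof.
  intros Hi H. unfold cube_dist. rewrite !l2norm_sq.
  rewrite (sumR_update d _ (fun j => interval_dist a (INR N - a) (IZR (y j)) ^ 2) i Hi).
  - rewrite H, Nat.eqb_refl. ring.
  - intros j Hj. rewrite H. apply Nat.eqb_neq in Hj. rewrite Hj. reflexivity.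
Qed.

Lemma dir_avg_exp_sq_cube_dist lam y : in_torus d N y -> cube_dist y < a - 1 ->
  dir_avg d (fun k => exp (- lam * cube_dist (srw_step d N k y) ^ 2)) =
  / INR (2 * d) * sumR d (fun i => exp (- lam * cube_dist y ^ 2) *
    (exp (- (lam * (interval_dist a (INR N - a) (IZR (y i) + 1) ^ 2
                    - interval_dist a (INR N - a) (IZR (y i)) ^ 2)))
     + exp (- (lam * (interval_dist a (INR N - a) (IZR (y i) - 1) ^ 2
                    - interval_dist a (INR N - a) (IZR (y i)) ^ 2))))).
Proof.
  intros Hy Hr. unfold dir_avg. rewrite sumR_pairs. f_equal. apply sumR_ext. intros i Hi.
  destruct (cube_dist_small_no_wrap y i Hy Hi Hr) as [Hlo Hhi].
  rewrite (sq_cube_dist_step y i (2 * i) (y i + 1)%Z Hi),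
          (sq_cube_dist_step y i (2 * i + 1) (y i - 1)%Z Hi).
  - assert (Hsplit : forall s t, exp (- lam * (s + t)) = exp (- lam * s) * exp (- (lam * t)))
      by (intros; rewrite <- exp_plus; f_equal; ring).
    rewrite plus_IZR, minus_IZR, !Hsplit. ring.
  - intros j. rewrite srw_step_odd. destruct (Nat.eqb_spec j i) as [->|]; auto.
    apply Z.mod_small; lia.
  - intros j. rewrite srw_step_even. destruct (Nat.eqb_spec j i) as [->|]; auto.
    apply Z.mod_small; lia.
Qed.

Lemma exp_sq_cube_dist_subharmonic lam y : (0 < d)%nat -> in_torus d N y -> 0 < lam ->
  cube_dist y < a - 1 ->
  lam * (2 * cube_dist y + 1) <= 1/2 ->
  3 * INR d / 2 <= lam * (cube_dist y ^ 2 - 2 * INR d * cube_dist y) ->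
  (1 + lam) * exp (- lam * cube_dist y ^ 2) <=
  dir_avg d (fun k => exp (- lam * cube_dist (srw_step d N k y) ^ 2)).
Proof.
  intros Hd Hy Hl Hr Hsmall Hfar. rewrite dir_avg_exp_sq_cube_dist by auto.
  set (r := cube_dist y) in *. set (P := exp (- lam * r ^ 2)).
  set (D i := interval_dist a (INR N - a) (IZR (y i))).
  assert (HP : 0 < P) by apply exp_pos.
  assert (Hr0 : 0 <= r) by apply l2norm_nonneg.
  assert (Hd' : 0 < INR d) by (apply lt_0_INR; lia).
  assert (Hterm : forall i, (i < d)%nat ->
    P * (2 - 2 * lam + 8 / 3 * lam ^ 2 * (D i ^ 2 - 2 * D i)) <=
    P * (exp (- (lam * (interval_dist a (INR N - a) (IZR (y i) + 1) ^ 2 - D i ^ 2)))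
       + exp (- (lam * (interval_dist a (INR N - a) (IZR (y i) - 1) ^ 2 - D i ^ 2))))).
  { intros i Hi. apply Rmult_le_compat_l; [lra|].
    apply exp_interval_dist_sq_second_diff; [lra|lra|]. fold (D i).
    assert (D i <= r) by (apply cube_dist_coord_le; auto).
    apply Rle_trans with (lam * (2 * r + 1)); [apply Rmult_le_compat_l|]; lra. }
  eapply Rle_trans; [|apply Rmult_le_compat_l; [|apply sumR_le; exact Hterm]];
    [|left; apply Rinv_0_lt_compat, lt_0_INR; lia].
  (* summing the coordinatewise estimates: [sum D i ^ 2 = r ^ 2] and [sum D i <= d r] *)
  rewrite (sumR_ext d _ (fun i => P * (2 - 2 * lam) + (P * (8 / 3 * lam ^ 2)) * D i ^ 2
                                 + (- (2 * P * (8 / 3 * lam ^ 2))) * D i)) by (intros; ring).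
  rewrite !sumR_plus, !sumR_scal, sumR_const.
  assert (Hsq : sumR d (fun i => D i ^ 2) = r ^ 2)
    by (unfold r, cube_dist; rewrite l2norm_sq; reflexivity).
  assert (HsD : sumR d D <= INR d * r)
    by (apply (sumR_le_l2norm d D); intros; apply interval_dist_nonneg).
  rewrite Hsq, mult_INR. replace (INR 2) with 2 by (simpl; lra).
  assert (HPl : 0 <= 2 * P * (8 / 3 * lam ^ 2)) by (apply Rmult_le_pos; nra).
  assert (Hgain : lam * (3 * INR d / 2) <= lam * (lam * (r ^ 2 - 2 * INR d * r)))
    by (apply Rmult_le_compat_l; lra).
  apply (Rmult_le_reg_l (2 * INR d)); [lra|].
  rewrite <- (Rmult_assoc (2 * INR d) (/ (2 * INR d))), Rinv_r, Rmult_1_l by lra.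
  nra.
Qed.

End CenteredCube.

Section CubeNeighbourhoods.

Variables (d N : nat) (gamma chi : R).
Hypothesis Ha : 0 < Lrad N gamma chi.
Hypothesis HaN : Lrad N gamma chi + 2 <= INR N - Lrad N gamma chi.
Hypothesis Hchi : 0 < chi.

Local Notation rho := (cube_dist d N (Lrad N gamma chi)).
Local Notation g := (Rpower (INR N) gamma).

Lemma Bset_cube_dist_le y : Bset d N gamma chi y -> rho y <= chi * INR N.
Proof.
  intros [Hy [c [Hc [Hcube Hcy]]]].
  pose proof (cube_dist_ball d N (Lrad N gamma chi) Ha HaN c y Hcube Hc Hy). lra.
Qed.

Lemma cube_dist_le_Bset y : in_torus d N y -> rho y + INR d <= chi * INR N -> Bset d N gamma chi y.
Proof.
  intros Hy Hr. split; auto.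
  destruct (cube_clamp_spec d N (Lrad N gamma chi) Ha HaN y) as [Hc [Hcube Hcy]].
  exists (cube_clamp N (Lrad N gamma chi) y). split; [|split]; auto.
  rewrite tdist_sym. eapply Rle_trans; [apply tdist_le; eauto|].
  - intros i _. apply Rle_refl.
  - lra.
Qed.

Lemma not_Delta_cube_dist_le y : in_torus d N y -> ~ DeltaSet d N gamma chi y ->
  rho y <= chi * INR N + g.
Proof.
  intros Hy HD.
  destruct (NNPP _ (fun H => HD (conj Hy H))) as [z [Hz Hzy]].
  pose proof (Bset_cube_dist_le z Hz).
  pose proof (cube_dist_lip d N (Lrad N gamma chi) Ha HaN z y (proj1 Hz) Hy). lra.
Qed.

(** A lattice point of [B] within [N^gamma] of [y]: move from the nearest point [c] of
    the cube towards [y] until the distance [chi N] from [c] is reached. *)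
Lemma cube_dist_lt_not_Delta y : in_torus d N y -> 4 * INR d <= g ->
  rho y < chi * INR N + g / 2 -> ~ DeltaSet d N gamma chi y.
Proof.
  intros Hy Hg Hr [_ HD]. apply HD.
  destruct (cube_clamp_spec d N (Lrad N gamma chi) Ha HaN y) as [Hc [Hcube Hcy]].
  set (c := cube_clamp N (Lrad N gamma chi) y) in *.
  set (A := l2norm d (fun i => Rabs (IZR (y i - c i)))) in *.
  assert (HA : 0 <= A) by apply l2norm_nonneg.
  assert (Ht : exists t, 0 <= t <= 1 /\ t * A <= chi * INR N /\
                         (1 - t) * A <= Rmax 0 (A - chi * INR N)).
  { destruct (Rle_dec A (chi * INR N)).
    - exists 1. rewrite Rmax_left by lra. split; [|split]; lra.
    - exists (chi * INR N / A). rewrite Rmax_right by lra.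
      assert (0 <= chi * INR N) by (apply Rmult_le_pos; [lra|apply pos_INR]).
      assert (E : chi * INR N / A * A = chi * INR N) by (field; lra).
      split; [split|].
      + unfold Rdiv. apply Rmult_le_pos; [lra|left; apply Rinv_0_lt_compat; lra].
      + apply (Rmult_le_reg_r A); [lra|]. lra.
      + rewrite Rmult_minus_distr_r, E. lra. }
  destruct Ht as [t [Ht [HtA H1tA]]].
  destruct (lattice_point_on_segment d N c y t Ht Hc Hy) as [z [Hz [Hzc Hyz]]].
  fold A in Hzc, Hyz. exists z. split.
  - split; auto. exists c. split; [|split]; auto.
    rewrite tdist_sym. eapply Rle_trans; [apply tdist_le; eauto|].
    + intros i _. apply Rle_refl.
    + lra.
  - rewrite tdist_sym. eapply Rle_trans; [apply tdist_le; eauto|].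
    + intros i _. apply Rle_refl.
    + pose proof (pos_INR d). unfold Rmax in H1tA. destruct Rle_dec in H1tA; lra.
Qed.

Lemma cube_dist_le_Gset y : in_torus d N y -> rho y <= chi * INR N / 2 - INR d - 1 ->
  Gset d N gamma chi y.
Proof.
  intros Hy Hr. pose proof (pos_INR d). assert (0 <= rho y) by apply l2norm_nonneg.
  split; [apply cube_dist_le_Bset; auto; lra|].
  intros z [[Hz _] [w [Hw [HwB Hzw]]]].
  assert (chi * INR N < rho w + INR d)
    by (apply Rnot_le_lt; intros C; apply HwB, cube_dist_le_Bset; auto).
  pose proof (cube_dist_lip d N (Lrad N gamma chi) Ha HaN z w Hz Hw).
  pose proof (cube_dist_lip d N (Lrad N gamma chi) Ha HaN y z Hy Hz). lra.
Qed.

End CubeNeighbourhoods.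

(** [lam = potential_rate d chi / N ^ 2] makes [lam * (chi N / 4) ^ 2 = 3 d / 2], the
    threshold of [exp_sq_cube_dist_subharmonic] at distance [chi N / 4] from the cube. *)
Definition potential_rate (d : nat) (chi : R) : R := 24 * INR d / chi ^ 2.

Definition hit_const (d : nat) (chi : R) : R :=
  let K := potential_rate d chi in exp (- (K * chi ^ 2)) * (K * chi) / (1 + K * chi).

Lemma potential_rate_pos d chi : (0 < d)%nat -> 0 < chi -> 0 < potential_rate d chi.
Proof.
  intros Hd Hchi. assert (0 < INR d) by (apply lt_0_INR; lia).
  unfold potential_rate. apply Rdiv_lt_0_compat; nra.
Qed.

Lemma hit_const_pos d chi : (0 < d)%nat -> 0 < chi -> 0 < hit_const d chi.
Proof.
  intros Hd Hchi. pose proof (potential_rate_pos d chi Hd Hchi).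
  unfold hit_const. apply Rdiv_lt_0_compat; [apply Rmult_lt_0_compat; [apply exp_pos|]|]; nra.
Qed.

Section FixedScale.

Variables (d N : nat) (gamma chi : R).

Local Notation n := (INR N).
Local Notation g := (Rpower (INR N) gamma).
Local Notation K := (potential_rate d chi).
Local Notation lam := (potential_rate d chi / INR N ^ 2).
Local Notation rho := (cube_dist d N (Lrad N gamma chi)).
Local Notation psi := (fun y => exp (- lam * rho y ^ 2)).
Local Notation c0 := (exp (- lam * (chi * INR N + Rpower (INR N) gamma / 2) ^ 2)).

Hypothesis Hd : (0 < d)%nat.
Hypothesis Hchi : 0 < chi < 1 / 4.
Hypothesis Hg_lo : 6 * INR d + 2 <= g.
Hypothesis Hg_hi : g <= n / 16.
Hypothesis Hn : 16 <= n.
Hypothesis Hn_chi : 4 * (3 * INR d + 1) <= chi * n.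
Hypothesis Hn_K : 6 * K <= n.

Lemma potential_lam_pos : 0 < lam.
Proof. pose proof (potential_rate_pos d chi Hd (proj1 Hchi)). apply Rdiv_lt_0_compat; nra. Qed.

Lemma Lrad_cube_bounds : 0 < Lrad N gamma chi /\ Lrad N gamma chi + 2 <= n - Lrad N gamma chi.
Proof.
  pose proof (pos_INR d). assert (chi * n <= n / 4) by nra. unfold Lrad. split; nra.
Qed.

Lemma potential_le_on_Delta y : in_torus d N y -> DeltaSet d N gamma chi y -> psi y <= c0.
Proof.
  intros Hy HDy. destruct Lrad_cube_bounds as [Ha HaN].
  pose proof potential_lam_pos. pose proof (pos_INR d).
  apply exp_le_compat.
  assert (~ rho y < chi * n + g / 2).
  { intros C. revert HDy. apply cube_dist_lt_not_Delta; auto; lra. }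
  assert (0 <= chi * n + g / 2) by nra.
  assert ((chi * n + g / 2) ^ 2 <= rho y ^ 2) by (apply pow_incr; lra). nra.
Qed.

Lemma potential_drift y : in_torus d N y -> ~ DeltaSet d N gamma chi y -> ~ Gset d N gamma chi y ->
  psi y + lam * exp (- K) <= dir_avg d (fun k => psi (srw_step d N k y)).
Proof.
  intros Hy HnD HnG. destruct Lrad_cube_bounds as [Ha HaN].
  pose proof potential_lam_pos. pose proof (potential_rate_pos d chi Hd (proj1 Hchi)).
  pose proof (pos_INR d).
  pose proof (not_Delta_cube_dist_le d N gamma chi Ha HaN y Hy HnD) as Hfar.
  assert (Hnear : chi * n / 2 - INR d - 1 < rho y)
    by (apply Rnot_le_lt; intros C; apply HnG, cube_dist_le_Gset; auto).
  assert (Hlamn : lam * n ^ 2 = K) by (field; lra).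
  set (r := rho y) in *. assert (Hr0 : 0 <= r) by apply l2norm_nonneg.
  assert (Hsmall : lam * (2 * r + 1) <= 1 / 2).
  { assert (lam * (2 * r + 1) <= lam * (3 * n)) by (apply Rmult_le_compat_l; nra).
    assert (lam * (3 * n) * n = 3 * K) by (field; lra). nra. }
  assert (Hlarge : 3 * INR d / 2 <= lam * (r ^ 2 - 2 * INR d * r)).
  { assert (r - 2 * INR d >= chi * n / 4) by lra.
    assert (r * (r - 2 * INR d) >= (chi * n / 4) ^ 2) by nra.
    assert (lam * (chi * n / 4) ^ 2 = 3 * INR d / 2) by (unfold potential_rate; field; lra).
    assert (lam * (chi * n / 4) ^ 2 <= lam * (r ^ 2 - 2 * INR d * r))
      by (apply Rmult_le_compat_l; nra).
    lra. }
  pose proof (exp_sq_cube_dist_subharmonic d N (Lrad N gamma chi) HaN lam y Hd Hy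
                ltac:(lra) ltac:(fold r; unfold Lrad; lra) Hsmall Hlarge) as Hsub.
  fold r in Hsub. cbv beta. fold r.
  assert (exp (- K) <= exp (- lam * r ^ 2)).
  { apply exp_le_compat. assert (r ^ 2 <= n ^ 2) by (apply pow_incr; nra). nra. }
  nra.
Qed.

Lemma potential_ge_on_B x : Bset d N gamma chi x -> exp (- (K * chi ^ 2)) <= psi x.
Proof.
  intros HxB. destruct Lrad_cube_bounds as [Ha HaN]. pose proof potential_lam_pos.
  pose proof (Bset_cube_dist_le d N gamma chi Ha HaN x HxB).
  assert (0 <= rho x) by apply l2norm_nonneg.
  apply exp_le_compat.
  assert (rho x ^ 2 <= (chi * n) ^ 2) by (apply pow_incr; lra).
  assert (lam * (chi * n) ^ 2 = K * chi ^ 2) by (field; lra). nra.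
Qed.

(** With [u = K chi g / n], [c0 <= exp (- K chi^2) exp (- u)] and [1 - exp (- u) >= u / (1 + u)]. *)
Lemma potential_gap : hit_const d chi * (g / n) <= exp (- (K * chi ^ 2)) - c0.
Proof.
  pose proof (potential_rate_pos d chi Hd (proj1 Hchi)). pose proof potential_lam_pos.
  assert (Hgp : 0 < g) by apply exp_pos.
  set (u := K * chi * (g / n)).
  assert (Hu : 0 < u) by (unfold u; apply Rmult_lt_0_compat; [nra | apply Rdiv_lt_0_compat; lra]).
  assert (Hu' : u <= K * chi).
  { assert (g / n <= 1).
    { unfold Rdiv. apply (Rmult_le_reg_r n); [lra|].
      rewrite Rmult_assoc, Rinv_l, Rmult_1_r by lra. lra. }
    unfold u. rewrite <- (Rmult_1_r (K * chi)) at 2. apply Rmult_le_compat_l; nra. }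
  assert (Hc0 : c0 <= exp (- (K * chi ^ 2)) * exp (- u)).
  { rewrite <- exp_plus. apply exp_le_compat.
    assert (lam * (chi * n + g / 2) ^ 2 = K * chi ^ 2 + u + lam * (g / 2) ^ 2)
      by (unfold u; field; lra).
    assert (0 <= lam * (g / 2) ^ 2) by nra. nra. }
  assert (Hexp : exp (- u) <= 1 / (1 + u)).
  { pose proof (exp_ineq1_le u). pose proof (exp_pos (- u)).
    assert (exp u * exp (- u) = 1) by (rewrite <- exp_plus, Rplus_opp_r; apply exp_0).
    apply (Rmult_le_reg_l (1 + u)); [lra|]. field_simplify; nra. }
  assert (u / (1 + K * chi) <= u / (1 + u))
    by (apply Rmult_le_compat_l; [lra|]; apply Rinv_le_contravar; lra).
  assert (E : hit_const d chi * (g / n) = exp (- (K * chi ^ 2)) * (u / (1 + K * chi)))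
    by (unfold hit_const, u; field; nra).
  assert (1 - 1 / (1 + u) = u / (1 + u)) by (field; lra).
  pose proof (exp_pos (- (K * chi ^ 2))).
  rewrite E. nra.
Qed.

Lemma hit_prob_ge_fixed_scale x : in_torus d N x -> Bset d N gamma chi x ->
  exists l, Un_cv (fun k => srw_hit d N (Gset d N gamma chi) (DeltaSet d N gamma chi) k x) l /\
    hit_const d chi * (g / n) <= l.
Proof.
  intros Hx HxB. pose proof potential_lam_pos. pose proof potential_gap.
  assert (HN : (0 < N)%nat) by (apply INR_lt; simpl; lra).
  destruct (srw_hit_cv_ge d N (Gset d N gamma chi) (DeltaSet d N gamma chi) Hd HN
              psi c0 (lam * exp (- K))) with (x := x) as [l [Hcv Hl]]; auto.
  - intros y _. split; [left; apply exp_pos|]. rewrite <- exp_0. apply exp_le_compat.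
    assert (0 <= rho y ^ 2) by apply pow2_ge_0. nra.
  - apply potential_le_on_Delta.
  - left; apply exp_pos.
  - apply Rmult_lt_0_compat; [lra|apply exp_pos].
  - apply potential_drift.
  - exists l. split; auto. pose proof (potential_ge_on_B x HxB). lra.
Qed.

End FixedScale.

Lemma scale_hypotheses_eventually d gamma chi : (0 < d)%nat -> 0 < gamma < 1 -> 0 < chi ->
  exists N0, forall N, (N0 <= N)%nat ->
    6 * INR d + 2 <= Rpower (INR N) gamma /\ Rpower (INR N) gamma <= INR N / 16 /\
    16 <= INR N /\ 4 * (3 * INR d + 1) <= chi * INR N /\ 6 * potential_rate d chi <= INR N.
Proof.
  intros Hd Hg Hchi. pose proof (pos_INR d).
  destruct (INR_eventually_ge (Rpower (6 * INR d + 2) (/ gamma))) as [N1 H1].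
  destruct (INR_eventually_ge (Rpower 16 (/ (1 - gamma)))) as [N2 H2].
  destruct (INR_eventually_ge 16) as [N3 H3].
  destruct (INR_eventually_ge (4 * (3 * INR d + 1) / chi)) as [N4 H4].
  destruct (INR_eventually_ge (6 * potential_rate d chi)) as [N5 H5].
  exists (N1 + N2 + N3 + N4 + N5)%nat. intros N HN.
  specialize (H1 N ltac:(lia)). specialize (H2 N ltac:(lia)). specialize (H3 N ltac:(lia)).
  specialize (H4 N ltac:(lia)). specialize (H5 N ltac:(lia)).
  split; [|split; [|split; [|split]]]; auto.
  - apply Rpower_ge_of_ge; lra.
  - apply Rpower_sublinear in H2; lra.
  - apply (Rmult_le_compat_l chi) in H4; [|lra].
    replace (chi * (4 * (3 * INR d + 1) / chi)) with (4 * (3 * INR d + 1)) in H4 by (field; lra).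
    exact H4.
Qed.

Theorem mainTheorem12 :
  forall (d : nat) (gamma chi : R),
    (3 <= d)%nat ->
    1 / (INR d - 1) < gamma < 1 ->
    0 < chi < 1 / 4 ->
    exists c1 : R, 0 < c1 /\
      exists N0 : nat, forall N : nat, (N0 <= N)%nat ->
        forall x : pt, in_torus d N x ->
          bdry d N (Bset d N gamma chi) x ->
          exists l : R,
            Un_cv (fun n => srw_hit d N (Gset d N gamma chi) (DeltaSet d N gamma chi) n x) l /\
            c1 * Rpower (INR N) (gamma - 1) <= l.
Proof.
  intros d gamma chi Hd Hgamma Hchi.
  assert (Hd0 : (0 < d)%nat) by lia.
  assert (Hg0 : 0 < gamma).
  { assert (3 <= INR d) by (replace 3 with (INR 3) by (simpl; lra); apply le_INR; exact Hd).
    assert (0 < 1 / (INR d - 1)) by (apply Rdiv_lt_0_compat; lra). lra. }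
  exists (hit_const d chi). split; [apply hit_const_pos; [exact Hd0|lra]|].
  destruct (scale_hypotheses_eventually d gamma chi Hd0 ltac:(lra) ltac:(lra)) as [N0 HN0].
  exists N0. intros N HN x Hx [HxB _].
  destruct (HN0 N HN) as (Hg_lo & Hg_hi & Hn & Hn_chi & Hn_K).
  destruct (hit_prob_ge_fixed_scale d N gamma chi Hd0 Hchi Hg_lo Hg_hi Hn Hn_chi Hn_K x Hx HxB)
    as [l [Hcv Hl]].
  exists l. split; [exact Hcv|]. rewrite Rpower_minus_1 by lra. exact Hl.
Qed.
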